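(* Let $G$ be split with root system of type $G_2$, simple roots $\alpha_1$ (short) and $\alpha_2$ (long), and let $\widetilde G$ be an $n$-fold Brylinski--Deligne cover associated with a Weyl-invariant quadratic form $Q$. If $n_{\alpha_2}=3n_{\alpha_1}$, then $$f_X(\Phi_+^\vee)=f_Y(\Phi_+)=\frac{1}{3n_{\alpha_1}}\{1,4,5\}\cup\frac{1}{n_{\alpha_1}}\{1,2,3\}.$$ If $n_{\alpha_1}=n_{\alpha_2}$ $(=n_\alpha)$, then $f_X(\Phi^\vee_+)=f_Y(\Phi_+)=\frac{1}{n_\alpha}[1,5]$.
   Context: $[a,b]$ denotes $\{a,\dots,b\}$. Notation: $\omega_\alpha$ fundamental weights, $\omega^\vee_\alpha$ fundamental coweights, $\rho^\vee=\sum_{\alpha\in\Delta}\omega_\alpha^\vee$. $B_Q(y,z)=Q(y+z)-Q(y)-Q(z)$, $Y_{Q,n}=\{y\in Y:B_Q(y,z)\in n\mathbf Z\ \forall z\in Y\}$, $n_\alpha=n/\gcd(n,Q(\alpha^\vee))$, and $\tilde n_\alpha$ ($\alpha\in\Phi$) defined by $\mathbf Z\alpha^\vee\cap Y_{Q,n}=\mathbf Z\tilde n_\alpha\alpha^\vee$ (for type $G_2$ one has $\tilde n_\alpha=n_\alpha$). $f_X:\Phi_+^\vee\to\mathbf Q$, $f_X(\beta^\vee)=\sum_{\alpha\in\Delta}\langle\omega_\alpha/\tilde n_\alpha,\beta^\vee\rangle$; $f_Y:\Phi_+\to\mathbf Q$, $f_Y(\beta)=\langle\rho^\vee,\beta\rangle/\tilde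 n_\beta$. *)

From mathcomp Require Import all_boot all_order all_algebra.
Set Implicit Arguments. Unset Strict Implicit. Unset Printing Implicit Defensive.
Import Order.TTheory GRing.Theory Num.Theory.
Local Open Scope ring_scope.

(* Root datum of split G2 (simply connected = adjoint, so Y is the coroot
   lattice and X the root lattice).
   Y = int * int : coordinates w.r.t. the simple coroots (a1^v, a2^v).
   X = int * int : coordinates w.r.t. the simple roots (a1, a2),
   a1 short, a2 long.  Cartan pairing:
   <a1,a1^v>=2, <a1,a2^v>=-1, <a2,a1^v>=-3, <a2,a2^v>=2. *)

Definition lat := (int * int)%type.

Definition pair (x : lat) (y : lat) : int :=
  x.1 * (2 * y.1 - y.2) + x.2 * (- 3 * y.1 + 2 * y.2).

Inductive proot := r1 | r2 | r12 | r112 | r1112 | r11122.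

Definition G2pos : seq proot := [:: r1; r2; r12; r112; r1112; r11122].

Definition root (b : proot) : lat :=
  match b with
  | r1 => (1, 0) | r2 => (0, 1) | r12 => (1, 1)
  | r112 => (2, 1) | r1112 => (3, 1) | r11122 => (3, 2)
  end%R.

Definition coroot (b : proot) : lat :=
  match b with
  | r1 => (1, 0) | r2 => (0, 1) | r12 => (1, 3)
  | r112 => (2, 3) | r1112 => (1, 1) | r11122 => (1, 2)
  end%R.

(* fundamental weights (simple-root coordinates): <omega_i, a_j^v> = delta_ij *)
Definition omega1 : lat := (2, 1)%R.
Definition omega2 : lat := (3, 2)%R.
(* rho^v = omega1^v + omega2^v = (2 a1^v + 3 a2^v) + (a1^v + 2 a2^v) *)
Definition rho_vee : lat := (3, 5)%R.

Definition ladd (y z : lat) : lat := (y.1 + z.1, y.2 + z.2).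
Definition lscale (k : int) (y : lat) : lat := (k * y.1, k * y.2).

Definition refl (b : proot) (y : lat) : lat :=
  ladd y (lscale (- pair (root b) y) (coroot b)).

Definition is_quadratic (Q : lat -> int) : Prop :=
  exists a b c : int, forall y : lat, Q y = a * y.1 ^+ 2 + b * y.1 * y.2 + c * y.2 ^+ 2.

(* Weyl-invariance (W is generated by the simple reflections) *)
Definition weyl_invariant (Q : lat -> int) : Prop :=
  forall y : lat, Q (refl r1 y) = Q y /\ Q (refl r2 y) = Q y.

Definition BQ (Q : lat -> int) (y z : lat) : int := Q (ladd y z) - Q y - Q z.

Definition YQn (Q : lat -> int) (n : nat) (y : lat) : Prop :=
  forall z : lat, (n%:Z %| BQ Q y z)%Z.

Definition n_alpha (Q : lat -> int) (n : nat) (b : proot) : nat :=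
  (n %/ gcdn n `|Q (coroot b)|)%N.

(* m is tilde n_alpha:  Z alpha^v  cap  Y_{Q,n} = Z m alpha^v *)
Definition tilde_n_spec (Q : lat -> int) (n : nat) (b : proot) (m : nat) : Prop :=
  forall k : int, YQn Q n (lscale k (coroot b)) <-> (m%:Z %| k)%Z.

Definition fX (tn : proot -> nat) (b : proot) : rat :=
  (pair omega1 (coroot b))%:~R / (tn r1)%:R
  + (pair omega2 (coroot b))%:~R / (tn r2)%:R.

Definition fY (tn : proot -> nat) (b : proot) : rat :=
  (pair (root b) rho_vee)%:~R / (tn b)%:R.

(* A Weyl-invariant quadratic form on the coroot lattice of G2 is c times the
   standard one, so Q(a^v) is 3c on short roots and c on long roots, and
   B_Q(a^v, y) = Q(a^v) <a, y>.  Since every root is primitive in X, the line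
   Z a^v meets Y_{Q,n} exactly in the multiples k a^v with n | k Q(a^v), i.e.
   tilde n_a = n_a; moreover n_a only depends on the length of a.  Both f_X
   and f_Y then become explicit in n_{a1}, n_{a2}, and the two cases are
   direct computations. *)

From Pilot Require Import Defs.
From mathcomp Require Import all_boot all_order all_algebra.
From mathcomp Require Import ring zify.
Set Implicit Arguments. Unset Strict Implicit. Unset Printing Implicit Defensive.
Import Order.TTheory GRing.Theory Num.Theory.
Local Open Scope ring_scope.

Lemma dvdn_mul_divgcd n m t : (0 < n)%N ->
  (n %| t * m)%N = (n %/ gcdn n m %| t)%N.
Proof.
move=> n_gt0; set g := gcdn n m.
have g_gt0 : (0 < g)%N by rewrite gcdn_gt0 n_gt0.
have nE : n = (n %/ g * g)%N by rewrite divnK ?dvdn_gcdl.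
apply/idP/idP => [dv_n_tm | /dvdnP[s ->]].
  have : (n %| t * g)%N by rewrite /g gcdnC muln_gcdr dvdn_gcd dv_n_tm dvdn_mull.
  by rewrite {1}nE dvdn_pmul2r.
by rewrite mulnAC -mulnA -muln_divCA_gcd dvdn_mull ?dvdn_mulr.
Qed.

Lemma n_alpha_gt0 Q n b : (0 < n)%N -> (0 < n_alpha Q n b)%N.
Proof. by move=> n_gt0; rewrite divn_gt0 ?gcdn_gt0 ?n_gt0 // dvdn_leq ?dvdn_gcdl. Qed.

Lemma pair_root_eq1 b : exists z : lat, pair (Defs.root b) z = 1.
Proof.
by case: b; [exists (0, -1) | exists (1, 2) | exists (0, 1)
           | exists (1, 0) | exists (0, -1) | exists (0, 1)].
Qed.

Definition G2_form (c : int) (y : lat) : int :=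
  c * (3 * y.1 ^+ 2 - 3 * y.1 * y.2 + y.2 ^+ 2).

Definition long_root (b : proot) : bool :=
  if b is (r2 | r1112 | r11122) then true else false.

Lemma weyl_invariant_G2_form Q :
  is_quadratic Q -> weyl_invariant Q -> exists c, Q =1 G2_form c.
Proof.
move=> [a [b [c QE]]] QW; exists c => y.
have [+ _] := QW (0, 1); have [_ +] := QW (1, 0).
rewrite !QE /refl /ladd /lscale /pair /= => s2E s1E.
have -> : a = 3 * c by lia.
have -> : b = - 3 * c by lia.
by rewrite /G2_form; ring.
Qed.

Section G2Form.

Variables (Q : lat -> int) (c : int).
Hypothesis QE : Q =1 G2_form c.

Lemma Q_coroot b : Q (coroot b) = if long_root b then c else 3 * c.
Proof. by rewrite QE /G2_form; case: b => /=; ring. Qed.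

Lemma n_alpha_long n b :
  n_alpha Q n b = n_alpha Q n (if long_root b then r2 else r1).
Proof. by rewrite /n_alpha !Q_coroot; case: b. Qed.

Lemma BQ_lscale_coroot b k z :
  BQ Q (lscale k (coroot b)) z = k * Q (coroot b) * pair (Defs.root b) z.
Proof. by rewrite /BQ !QE /G2_form /pair /ladd /lscale; case: b => /=; ring. Qed.

Lemma YQn_lscale_coroot n b k :
  YQn Q n (lscale k (coroot b)) <-> (n%:Z %| k * Q (coroot b))%Z.
Proof.
split => [dvd | dvd z]; last by rewrite BQ_lscale_coroot dvdz_mulr.
have [z pz] := pair_root_eq1 b.
by move: (dvd z); rewrite BQ_lscale_coroot pz mulr1.
Qed.

Lemma tilde_n_spec_n_alpha n b m : (0 < n)%N ->
  tilde_n_spec Q n b m -> m = n_alpha Q n b.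
Proof.
move=> n_gt0 mP; apply/eqP.
suff dvdE t : (m %| t)%N = (n_alpha Q n b %| t)%N.
  by rewrite eqn_dvd dvdE dvdnn -dvdE dvdnn.
rewrite /n_alpha -dvdn_mul_divgcd //.
have := mP t; rewrite YQn_lscale_coroot !dvdzE abszM /=.
by move=> [to_dvd of_dvd]; apply/idP/idP => [/of_dvd | /to_dvd].
Qed.

End G2Form.

Lemma map_fX_G2pos tn :
  [seq fX tn b | b <- G2pos] =
  [:: 1 / (tn r1)%:R; 1 / (tn r2)%:R; 1 / (tn r1)%:R + 3 / (tn r2)%:R;
      2 / (tn r1)%:R + 3 / (tn r2)%:R; 1 / (tn r1)%:R + 1 / (tn r2)%:R;
      1 / (tn r1)%:R + 2 / (tn r2)%:R].
Proof. by rewrite /= /fX /pair /omega1 /omega2 /=; congr [:: _; _; _; _; _; _]; ring. Qed.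

Lemma map_fY_G2pos tn :
  (forall b, tn b = tn (if long_root b then r2 else r1)) ->
  [seq fY tn b | b <- G2pos] =
  [:: 1 / (tn r1)%:R; 1 / (tn r2)%:R; 2 / (tn r1)%:R;
      3 / (tn r1)%:R; 4 / (tn r2)%:R; 5 / (tn r2)%:R].
Proof. by move=> tnE; rewrite /= /fY !(tnE r12, tnE r112, tnE r1112, tnE r11122). Qed.

Lemma all_mem_eq (T : eqType) (s t : seq T) :
  all (mem t) s -> all (mem s) t -> s =i t.
Proof. by move=> /allP st /allP ts x; apply/idP/idP; [apply: st | apply: ts]. Qed.

Theorem lemma3p6 (n : nat) (Q : lat -> int) (tn : proot -> nat) :
  (0 < n)%N -> is_quadratic Q -> weyl_invariant Q ->
  (forall b : proot, tilde_n_spec Q n b (tn b)) ->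
  ((n_alpha Q n r2 = 3 * n_alpha Q n r1)%N ->
     let m : rat := (n_alpha Q n r1)%:R in
     let S := [:: 1 / (3 * m); 4 / (3 * m); 5 / (3 * m); 1 / m; 2 / m; 3 / m] in
     [seq fX tn b | b <- G2pos] =i S /\ [seq fY tn b | b <- G2pos] =i S)
  /\
  (n_alpha Q n r1 = n_alpha Q n r2 ->
     let m : rat := (n_alpha Q n r1)%:R in
     let S := [seq k%:R / m | k <- iota 1 5] in
     [seq fX tn b | b <- G2pos] =i S /\ [seq fY tn b | b <- G2pos] =i S).
Proof.
move=> n_gt0 Q_quad QW tnP.
have [c QE] := weyl_invariant_G2_form Q_quad QW.
have tnE b : tn b = n_alpha Q n b := tilde_n_spec_n_alpha QE n_gt0 (tnP b).
have tn_long b : tn b = tn (if long_root b then r2 else r1).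
  by rewrite !tnE (n_alpha_long QE).
rewrite map_fX_G2pos (map_fY_G2pos tn_long) !tnE.
have : (n_alpha Q n r1)%:R != 0 :> rat by rewrite pnatr_eq0 -lt0n n_alpha_gt0.
move: (n_alpha Q n r1) (n_alpha Q n r2) => n1 n2 n1_neq0.
split=> [-> | <-] m S.
- rewrite natrM.
  have -> : [:: 1 / m; 1 / (3 * m); 1 / m + 3 / (3 * m);
      2 / m + 3 / (3 * m); 1 / m + 1 / (3 * m); 1 / m + 2 / (3 * m)]
    = [:: 1 / m; 1 / (3 * m); 2 / m; 3 / m; 4 / (3 * m); 5 / (3 * m)].
    by congr [:: _; _; _; _; _; _]; field.
  (* [/=] would also try to evaluate the rational constants, which is slow. *)
  by split; apply: all_mem_eq; rewrite /S; cbn [all]; rewrite !inE !eqxx ?orbT.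
- have -> : [:: 1 / m; 1 / m; 1 / m + 3 / m; 2 / m + 3 / m; 1 / m + 1 / m;
      1 / m + 2 / m] = [:: 1%:R / m; 1%:R / m; 4%:R / m; 5%:R / m; 2%:R / m; 3%:R / m].
    by congr [:: _; _; _; _; _; _]; field.
  by split; apply: all_mem_eq; rewrite /S; cbn [all map iota]; rewrite !inE !eqxx ?orbT.
Qed.
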